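(* Let $X$ be a super $X$-set parameter and let $G$ be a graph of order $n$. Then: (1) $X(G)\le\underline{x_0}(G)\le x_0(G)$; (2) if $G$ has only one minimal $X$-set, then $X(G)=\underline{x_0}(G)=x_0(G)$; (3) if $G$ has more than one minimal $X$-set, then $\overline{X}(G)+1\le x_0(G)\le\min\{\overline{X}(G)+X(G),\,n\}$; (4) if $G$ has more than one minimum $X$-set, then $X(G)+1\le\underline{x_0}(G)$.
   Context: All graphs are finite, simple, undirected, with nonempty vertex set. A super $X$-set parameter $X$ assigns to each graph $G$ a family of subsets of $V(G)$, called the $X$-sets of $G$, such that: every graph isomorphism maps $X$-sets to $X$-sets; every graph has at least one $X$-set; and (Superset) if $S$ is an $X$-set of $G$ and $S\subseteq S'\subseteq V(G)$, then $S'$ is an $X$-set of $G$. $X(G)$ is the minimum cardinality of an $X$-set; $\overline{X}(G)$ is the maximum cardinality of a minimal (w.r.t. inclusion) $X$-set. The $X$-TAR graph $\mathfrak{X}(G)$ has as vertices the $X$-sets of $G$, with $S_1S_2$ an edge iff $|S_1\ominus S_2|=1$. $\mathfrak{X}_k(G)$ is the subgraph of $\mathfrak{X}(G)$ induced by the $X$-sets of cardinality at most $k$ (a graph with no vertices is not regarded as connected). $x_0(G)$ is the least $k_0$ such that $\mathfrak{X}_k(G)$ is connected for all $k\ge k_0$, and $\underline{x_0}(G)$ is the least $k$ such that $\mathfrak{X}_k(G)$ is connected. *)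

From mathcomp Require Import all_boot.
Set Implicit Arguments. Unset Strict Implicit. Unset Printing Implicit Defensive.

Definition is_graph (T : finType) (e : rel T) : Prop :=
  [/\ symmetric e, irreflexive e & 0 < #|T|].

Definition graph_iso (T T' : finType) (e : rel T) (e' : rel T') (f : T -> T') : Prop :=
  bijective f /\ (forall x y, e' (f x) (f y) = e x y).

Record superX := SuperX {
  Xsets : forall T : finType, rel T -> {set {set T}};
  Xsets_iso : forall (T T' : finType) (e : rel T) (e' : rel T') (f : T -> T'),
      is_graph e -> is_graph e' -> graph_iso e e' f ->
      forall S, S \in Xsets e -> f @: S \in Xsets e';
  Xsets_nonempty : forall (T : finType) (e : rel T), is_graph e ->
      exists S, S \in Xsets e;
  Xsets_superset : forall (T : finType) (e : rel T), is_graph e ->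
      forall S S' : {set T}, S \in Xsets e -> S \subset S' -> S' \in Xsets e
}.

Section Params.
Variables (X : superX) (T : finType) (e : rel T).

Definition isXset (S : {set T}) : bool := S \in Xsets X e.

(* X(G): minimum cardinality of an X-set (#|T| is an upper bound / default). *)
Definition Xnum : nat := \big[minn/#|T|]_(S in Xsets X e) #|S|.

Definition minimalX (S : {set T}) : bool := minset isXset S.

Definition Xbar : nat := \max_(S | minimalX S) #|S|.

Definition minimumX (S : {set T}) : bool := isXset S && (#|S| == Xnum).

Definition symdiff (A B : {set T}) : {set T} := (A :\: B) :|: (B :\: A).

(* Edge relation of the TAR graph X_k(G): induced on X-sets of size <= k. *)
Definition tar_k (k : nat) : rel {set T} := fun S1 S2 =>
  [&& isXset S1, isXset S2, #|S1| <= k, #|S2| <= k & #|symdiff S1 S2| == 1].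

Definition tar_vertex (k : nat) (S : {set T}) : bool := isXset S && (#|S| <= k).

Definition tar_connected (k : nat) : Prop :=
  (exists S, tar_vertex k S) /\
  (forall S1 S2, tar_vertex k S1 -> tar_vertex k S2 -> connect (tar_k k) S1 S2).

Definition is_x0 (k0 : nat) : Prop :=
  (forall k, k0 <= k -> tar_connected k) /\
  (forall k1, (forall k, k1 <= k -> tar_connected k) -> k0 <= k1).

Definition is_lx0 (k0 : nat) : Prop :=
  tar_connected k0 /\ (forall k1, tar_connected k1 -> k0 <= k1).

End Params.

From mathcomp Require Import all_boot order zify.
From Stdlib Require Import Classical Wf_nat.

Set Implicit Arguments. Unset Strict Implicit. Unset Printing Implicit Defensive.

(* A minimal X-set M is an isolated vertex of X_{|M|}(G): a neighbour of size
   at most |M| differs from M in a single element, hence is a proper subset of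
   M, which contradicts minimality.  Two distinct minimal X-sets of size at most
   Xbar, or two minimum X-sets, therefore disconnect X_Xbar(G), resp. X_X(G),
   which gives the lower bounds.  Conversely X_k(G) is connected as soon as
   every vertex reaches a common hub; the hub is the unique minimal X-set when
   there is one, a minimum X-set when k >= Xbar + X, and V(G) when k >= n. *)

Lemma ex_least_nat (P : nat -> Prop) n :
  P n -> exists m, P m /\ forall k, P k -> m <= k.
Proof.
move=> Pn; have [m [[Pm least_m] _]] :=
  dec_inh_nat_subset_has_unique_least_element P (fun k => classic (P k)) (ex_intro P n Pn).
by exists m; split=> // k /least_m/leP.
Qed.

Lemma symdiffD1 (T : finType) (A : {set T}) x :
  x \in A -> symdiff A (A :\ x) = [set x].
Proof.
move=> xA; apply/setP=> y; rewrite !inE.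
by case: (y =P x) => [->|_]; rewrite ?xA //; case: (y \in A).
Qed.

Lemma symdiff_card1_proper (T : finType) (A B : {set T}) :
  #|symdiff A B| = 1 -> #|B| <= #|A| -> B \proper A.
Proof.
rewrite /symdiff cardsU => dAB leBA.
have disjD : (A :\: B) :&: (B :\: A) = set0.
  by apply/setP=> y; rewrite !inE; case: (y \in A); case: (y \in B).
have := cardsID B A; have := cardsID A B.
rewrite disjD cards0 subn0 setIC in dAB * => cardA cardB.
have BA0 : #|B :\: A| = 0 by lia.
rewrite properEcard -setD_eq0 -cards_eq0 BA0 /=; lia.
Qed.

Section TARGraph.
Variables (X : superX) (T : finType) (e : rel T).
Hypothesis graph_e : is_graph e.

Local Notation Xset := (isXset X e).
Local Notation minimal := (minimalX X e).
Local Notation tar k := (tar_k X e k).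

Lemma Xset_superset (S S' : {set T}) : Xset S -> S \subset S' -> Xset S'.
Proof. exact: Xsets_superset. Qed.

Lemma Xset_setT : Xset setT.
Proof. by have [S XS] := Xsets_nonempty X graph_e; apply: Xset_superset XS (subsetT S). Qed.

Lemma Xnum_le_card S : Xset S -> Xnum X e <= #|S|.
Proof.
move=> XS; have := Order.TotalTheory.bigmin_le_cond #|T| (fun S : {set T} => #|S|) XS.
by rewrite minEnat.
Qed.

Lemma Xnum_attained : exists2 S, Xset S & #|S| = Xnum X e.
Proof.
have le_card_T S : Xset S -> #|S| <= #|T| by move=> _; apply: max_card.
rewrite /Xnum -minEnat (Order.TotalTheory.bigmin_eq_arg #|T| setT _ _ Xset_setT le_card_T).
by case: (Order.TotalTheory.arg_minP _ Xset_setT) => S XS _; exists S.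
Qed.

Lemma minimum_minimal S : Xset S -> #|S| = Xnum X e -> minimal S.
Proof.
move=> XS cardS; apply/minsetP; split=> // B XB sBS.
by apply/eqP; rewrite eqEcard sBS cardS Xnum_le_card.
Qed.

Lemma minimal_card_le_Xbar M : minimal M -> #|M| <= Xbar X e.
Proof. exact: (@leq_bigmax_cond _ minimal (fun S : {set T} => #|S|)). Qed.

Lemma tar_sym k : symmetric (tar k).
Proof.
move=> S1 S2; rewrite /tar_k /symdiff setUC.
by case: (Xset S1); case: (Xset S2); case: (#|S1| <= k); case: (#|S2| <= k).
Qed.

Lemma connect_tar_sub k (A B : {set T}) :
  Xset A -> A \subset B -> #|B| <= k -> connect (tar k) B A.
Proof.
move=> XA; move defn: #|B :\: A| => n; elim: n B defn => [|n IH] B cardBA sAB leBk.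
  have/eqP <- : B == A by rewrite eqEsubset -setD_eq0 -cards_eq0 cardBA.
  exact: connect0.
have [x /setDP [xB xA]] : exists x, x \in B :\: A by apply/card_gt0P; rewrite cardBA.
have sABx : A \subset B :\ x.
  by apply/subsetP=> y yA; rewrite !inE (subsetP sAB) // andbT; apply: contraNneq xA => <-.
have cardB := cardsD1 x B; rewrite xB in cardB.
have leBxk : #|B :\ x| <= k by lia.
apply: connect_trans (IH _ _ sABx leBxk).
  apply: connect1; rewrite /tar_k (Xset_superset XA sAB) (Xset_superset XA sABx).
  by rewrite leBk leBxk symdiffD1 // cards1.
have -> : B :\ x :\: A = (B :\: A) :\ x by rewrite !setDDl setUC.
by move: cardBA; rewrite (cardsD1 x (B :\: A)) inE xB xA => -[].
Qed.

(* S reaches M along S -> M' -> M' :|: M -> M, one element at a time. *)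
Lemma tar_connected_hub k M :
  tar_vertex X e k M ->
  (forall S, tar_vertex X e k S ->
     exists M', [/\ Xset M', M' \subset S & #|M' :|: M| <= k]) ->
  tar_connected X e k.
Proof.
move=> VM hub; have /andP [XM _] := VM.
have to_hub S : tar_vertex X e k S -> connect (tar k) S M.
  move=> VS; have [M' [XM' sM'S leUk]] := hub S VS; have /andP [_ leSk] := VS.
  apply: connect_trans (connect_tar_sub XM' sM'S leSk) _.
  apply: connect_trans (connect_tar_sub XM (subsetUr M' M) leUk).
  by rewrite (sym_connect_sym (@tar_sym k)) connect_tar_sub // subsetUl.
split=> [|S1 S2 V1 V2]; first by exists M.
apply: connect_trans (to_hub _ V1) _.
by rewrite (sym_connect_sym (@tar_sym k)) to_hub.
Qed.

Lemma tar_connected_ge_card k : #|T| <= k -> tar_connected X e k.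
Proof.
move=> leTk; apply: (@tar_connected_hub k setT).
  by rewrite /tar_vertex Xset_setT cardsT.
by move=> S /andP [XS _]; exists S; rewrite setUT cardsT.
Qed.

Lemma tar_connected_ge_Xbar_Xnum k : Xbar X e + Xnum X e <= k -> tar_connected X e k.
Proof.
have [M0 XM0 cardM0] := Xnum_attained => leXk.
apply: (@tar_connected_hub k M0).
  by rewrite /tar_vertex XM0 cardM0 (leq_trans _ leXk) ?leq_addl.
move=> S /andP [XS _]; have [M' minM' sM'S] := minset_exists XS.
exists M'; split=> //; first by case/minsetP: minM'.
rewrite (leq_trans (leq_card_setU M' M0)) // (leq_trans _ leXk) // -cardM0 leq_add2r.
exact: minimal_card_le_Xbar.
Qed.

Lemma tar_connected_unique_minimal M k :
  (forall S, minimal S -> S = M) -> Xnum X e <= k -> tar_connected X e k.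
Proof.
move=> uniqM leXk.
have XS_sup S : Xset S -> Xset M /\ M \subset S.
  move=> XS; have [M' minM' sM'S] := minset_exists XS.
  by rewrite -(uniqM _ minM'); case/minsetP: minM'.
have [M0 XM0 cardM0] := Xnum_attained; have [XM sMM0] := XS_sup _ XM0.
apply: (@tar_connected_hub k M).
  by rewrite /tar_vertex XM (leq_trans (subset_leq_card sMM0)) // cardM0.
move=> S /andP [XS leSk]; have [_ sMS] := XS_sup _ XS.
by exists M; rewrite setUid (leq_trans (subset_leq_card sMS)).
Qed.

Lemma minimal_tar_isolated M S : minimal M -> ~~ tar #|M| M S.
Proof.
case/minsetP=> _ minM; apply/negP=> /and5P [_ XS _ leSM /eqP dMS].
have /properP [sSM [x xM xS]] := symdiff_card1_proper dMS leSM.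
by move: xS; rewrite (minM S XS sSM) xM.
Qed.

Lemma tar_disconnected_minimal M M' :
  minimal M -> minimal M' -> M != M' -> #|M'| <= #|M| -> ~ tar_connected X e #|M|.
Proof.
move=> minM minM' neqMM' leM'M [_ conn].
have V M1 : minimal M1 -> #|M1| <= #|M| -> tar_vertex X e #|M| M1.
  by move=> minM1 leM1; rewrite /tar_vertex leM1 andbT; case/minsetP: minM1.
have /connectP [[|S p] /= path_p lastp] := conn M M' (V _ minM (leqnn _)) (V _ minM' leM'M).
  by move: neqMM'; rewrite lastp eqxx.
by case/andP: path_p => edgeMS _; move: (minimal_tar_isolated S minM); rewrite edgeMS.
Qed.

Lemma tar_disconnected_Xbar :
  1 < #|[set S | minimal S]| -> ~ tar_connected X e (Xbar X e).
Proof.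
move=> /card_gt1P [M1 [M2 [+ + neqM12]]]; rewrite !inE => minM1 minM2.
have some_minimal : 0 < #|minimal| by apply/card_gt0P; exists M1.
have [M minM cardM] := eq_bigmax_cond (fun S : {set T} => #|S|) some_minimal.
have XbarM : Xbar X e = #|M| by rewrite -cardM.
have [M' [minM' neqMM']] : exists M', minimal M' /\ M != M'.
  by case: (eqVneq M M1) => [->|]; [exists M2 | exists M1].
rewrite XbarM; apply: (tar_disconnected_minimal minM minM' neqMM').
by rewrite -XbarM minimal_card_le_Xbar.
Qed.

Lemma tar_disconnected_Xnum :
  1 < #|[set S | minimumX X e S]| -> ~ tar_connected X e (Xnum X e).
Proof.
move=> /card_gt1P [M1 [M2 [+ + neqM12]]].
rewrite !inE => /andP [XM1 /eqP cardM1] /andP [XM2 /eqP cardM2].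
rewrite -cardM1; apply: (tar_disconnected_minimal _ _ neqM12); rewrite ?cardM1 ?cardM2 //;
  exact: minimum_minimal.
Qed.

Lemma exists_x0 : exists a, is_x0 X e a.
Proof.
have [a x0_a] := @ex_least_nat (fun a => forall k, a <= k -> tar_connected X e k) _
  tar_connected_ge_card.
by exists a.
Qed.

Lemma exists_lx0 : exists b, is_lx0 X e b.
Proof.
have [b lx0_b] := ex_least_nat (tar_connected_ge_card (leqnn #|T|)).
by exists b.
Qed.

Lemma Xnum_le_lx0 b : is_lx0 X e b -> Xnum X e <= b.
Proof. by case=> [[[S /andP [XS leSb]] _] _]; rewrite (leq_trans (Xnum_le_card XS)). Qed.

Lemma lx0_le_x0 a b : is_x0 X e a -> is_lx0 X e b -> b <= a.
Proof. by case=> conn_a _ [_ least_b]; apply/least_b/conn_a. Qed.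

Lemma x0_gt_disconnected a k : is_x0 X e a -> ~ tar_connected X e k -> k < a.
Proof. by case=> conn_a _ disc_k; rewrite ltnNge; apply: contra_notN disc_k => /conn_a. Qed.

End TARGraph.

Theorem proposition2p31 (X : superX) (T : finType) (e : rel T) :
  is_graph e ->
  (exists a, is_x0 X e a) /\ (exists b, is_lx0 X e b) /\
  forall a b, is_x0 X e a -> is_lx0 X e b ->
    let n := #|T| in
    [/\ Xnum X e <= b <= a,
        #|[set S | minimalX X e S]| = 1 -> Xnum X e = b /\ b = a,
        1 < #|[set S | minimalX X e S]| ->
          Xbar X e + 1 <= a <= minn (Xbar X e + Xnum X e) n
      & 1 < #|[set S | minimumX X e S]| -> Xnum X e + 1 <= b].
Proof.
move=> graph_e; split; first exact: exists_x0.
split; first exact: exists_lx0.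
move=> a b x0_a lx0_b n.
have Xnum_b := Xnum_le_lx0 lx0_b; have b_a := lx0_le_x0 x0_a lx0_b.
have [_ least_a] := x0_a.
split; first by rewrite Xnum_b b_a.
- move=> /eqP /cards1P [M minimal_M].
  have uniqM S : minimalX X e S -> S = M by move=> minS; apply/set1P; rewrite -minimal_M inE.
  have a_Xnum : a <= Xnum X e by apply/least_a => k; apply: tar_connected_unique_minimal uniqM.
  have b_Xnum : b <= Xnum X e := leq_trans b_a a_Xnum.
  have a_b : a <= b := leq_trans a_Xnum Xnum_b.
  by split; apply/eqP; rewrite eqn_leq ?Xnum_b ?b_Xnum ?b_a ?a_b.
- move=> many_minimal.
  rewrite addn1 (x0_gt_disconnected x0_a (tar_disconnected_Xbar many_minimal)) leq_min.
  by rewrite !least_a //; [exact: tar_connected_ge_card | exact: tar_connected_ge_Xbar_Xnum].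
- move=> many_minimum; rewrite addn1 ltn_neqAle Xnum_b andbT.
  by apply: contra_notN (tar_disconnected_Xnum many_minimum) => /eqP ->; case: lx0_b.
Qed.
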